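(* Let $B$ be a block of a graph $\mathcal{G}$. If every vertex of $B$ has finite degree and for each pair of vertices $(a,b)$ of $B$ there are only finitely many distinct simple paths in $\mathcal{G}$ joining $a$ to $b$, then $B$ is finite.
   Context: A vertex $a$ of a graph is a cutvertex if there are two other vertices in its connected component such that every path joining them passes through $a$. A block of a graph is a maximal connected subgraph that has no cutvertex. *)

(* graphs may be infinite, so we use an arbitrary vertex type
   with a (Prop-valued) adjacency relation. *)
From Stdlib Require Import List.
Import ListNotations.

Section Graphs.
Context {V : Type}.

Definition finite_pred {T : Type} (P : T -> Prop) : Prop :=
  exists l : list T, forall x, P x -> In x l.

Fixpoint chain (E : V -> V -> Prop) (p : list V) : Prop :=
  match p with
  | x :: ((y :: _) as q) => E x y /\ chain E q
  | _ => True
  end.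

Definition walk (S : V -> Prop) (E : V -> V -> Prop) (a b : V) (p : list V) : Prop :=
  hd_error p = Some a /\ last p a = b /\ Forall S p /\ chain E p.

Definition simple_path (S : V -> Prop) (E : V -> V -> Prop) (a b : V) (p : list V) : Prop :=
  walk S E a b p /\ NoDup p.

Definition is_subgraph (adj : V -> V -> Prop) (S : V -> Prop) (E : V -> V -> Prop) : Prop :=
  (forall x y, E x y -> S x /\ S y /\ adj x y) /\ (forall x y, E x y -> E y x).

Definition subgraph_le (S1 : V -> Prop) (E1 : V -> V -> Prop)
    (S2 : V -> Prop) (E2 : V -> V -> Prop) : Prop :=
  (forall x, S1 x -> S2 x) /\ (forall x y, E1 x y -> E2 x y).

Definition connected (S : V -> Prop) (E : V -> V -> Prop) : Prop :=
  (exists x, S x) /\ forall x y, S x -> S y -> exists p, simple_path S E x y p.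

(* a is a cutvertex of (S, E): there are two other vertices in its connected
   component such that every path joining them passes through a *)
Definition is_cutvertex (S : V -> Prop) (E : V -> V -> Prop) (a : V) : Prop :=
  S a /\ exists x y, x <> a /\ y <> a /\
    (exists p, simple_path S E a x p) /\ (exists p, simple_path S E a y p) /\
    forall p, simple_path S E x y p -> In a p.

Definition no_cutvertex (S : V -> Prop) (E : V -> V -> Prop) : Prop :=
  forall a, ~ is_cutvertex S E a.

Definition is_block (adj : V -> V -> Prop) (S : V -> Prop) (E : V -> V -> Prop) : Prop :=
  is_subgraph adj S E /\ connected S E /\ no_cutvertex S E /\
  forall S' E', is_subgraph adj S' E' -> connected S' E' -> no_cutvertex S' E' ->
    subgraph_le S E S' E' -> subgraph_le S' E' S E.

End Graphs.

(* Fix a vertex a of the block B.  A rooted cycle is a duplicate-free list of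
   vertices of B, starting at a, whose consecutive entries and whose last entry
   and a are joined by edges of B.  The heart of the proof is:

     every vertex of B other than a lies on a rooted cycle.

   This is shown by walking along a path of B from the vertex to a: if w lies
   on a rooted cycle c (or w = a) and v is a neighbour of w off c, then since w
   is not a cutvertex there is a path from v to a avoiding w; its first vertex
   x on c differs from w, and rerouting c between x and w through that path
   gives a rooted cycle containing v.

   A rooted cycle, read as a list, is a simple path of the graph from a to one
   of its neighbours.  There are finitely many neighbours of a and finitely
   many paths from a to each of them, hence finitely many rooted cycles, and
   B consists of a together with their vertices. *)

From Stdlib Require Import List Classical.
Import ListNotations.

Section Lists.
Context {T : Type}.

Lemma chain_app_iff (E : T -> T -> Prop) (l1 l2 : list T) (y : T) :
  chain E (l1 ++ y :: l2) <-> chain E (l1 ++ [y]) /\ chain E (y :: l2).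
Proof.
  induction l1 as [|h [|h' t] IH]; simpl in *; [tauto | tauto |].
  rewrite IH. tauto.
Qed.

Lemma chain_mono (E F : T -> T -> Prop) (EF : forall x y, E x y -> F x y)
  (l : list T) : chain E l -> chain F l.
Proof.
  induction l as [|h [|h' t] IH]; simpl; auto.
  intros [Ehh' Ct]. split; [auto | exact (IH Ct)].
Qed.

Lemma chain_rev (E : T -> T -> Prop) (Esym : forall x y, E x y -> E y x)
  (l : list T) : chain E l -> chain E (rev l).
Proof.
  induction l as [|h [|h' t] IH]; simpl; auto.
  intros [Ehh' Ct]. specialize (IH Ct). simpl in IH.
  rewrite <- app_assoc. apply chain_app_iff. simpl. auto.
Qed.

Lemma chain_replace_middle (E : T -> T -> Prop) (A M B Q : list T) (x y : T) :
  chain E (A ++ x :: M ++ y :: B) -> chain E (x :: Q ++ [y]) ->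
  chain E (A ++ x :: Q ++ y :: B).
Proof.
  intros Hch HchQ.
  apply chain_app_iff in Hch as [HchA Hch]. apply chain_app_iff. split; auto.
  change (chain E ((x :: M) ++ y :: B)) in Hch.
  apply chain_app_iff in Hch as [_ HchB].
  change (chain E ((x :: Q) ++ y :: B)). apply chain_app_iff. auto.
Qed.

Lemma last_cons_default (x d d' : T) (l : list T) :
  last (x :: l) d = last (x :: l) d'.
Proof.
  revert x. induction l as [|y l IH]; intro x; [reflexivity|].
  change (last (y :: l) d = last (y :: l) d'). apply IH.
Qed.

Lemma last_in (l : list T) (d : T) : l <> [] -> In (last l d) l.
Proof.
  intro Hl. destruct (exists_last Hl) as [l' [x ->]]. rewrite last_last.
  apply in_or_app. simpl; auto.
Qed.

Lemma first_occurrence (Q : T -> Prop) (l : list T) :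
  (exists y, In y l /\ Q y) ->
  exists l1 x l2, l = l1 ++ x :: l2 /\ Q x /\ forall y, In y l1 -> ~ Q y.
Proof.
  induction l as [|h t IH]; intros [y [Hy Qy]]; [destruct Hy|].
  destruct (classic (Q h)) as [Qh|nQh].
  - exists [], h, t. simpl. auto.
  - destruct Hy as [<-|Hy]; [contradiction|].
    destruct IH as [l1 [x [l2 [-> [Qx Hl1]]]]]; [eauto|].
    exists (h :: l1), x, l2. simpl. repeat split; auto.
    intros z [<-|Hz]; auto.
Qed.

Lemma split_two (l : list T) (x w : T) : In x l -> In w l -> x <> w ->
  exists A M B, l = A ++ x :: M ++ w :: B \/ l = A ++ w :: M ++ x :: B.
Proof.
  induction l as [|h t IH]; simpl; [contradiction|].
  intros Hx Hw Hxw.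
  destruct Hx as [<-|Hx].
  - destruct Hw as [<-|Hw]; [congruence|].
    apply in_split in Hw as [M [B ->]]. exists [], M, B. auto.
  - destruct Hw as [<-|Hw].
    + apply in_split in Hx as [M [B ->]]. exists [], M, B. auto.
    + destruct (IH Hx Hw Hxw) as [A [M [B [-> | ->]]]];
        exists (h :: A), M, B; auto.
Qed.

Lemma NoDup_replace_middle (L1 M L2 Q : list T) :
  NoDup (L1 ++ M ++ L2) -> NoDup Q ->
  (forall y, In y Q -> ~ In y (L1 ++ M ++ L2)) ->
  NoDup (L1 ++ Q ++ L2).
Proof.
  induction L1 as [|h t IH]; simpl; intros Hnd HQ Hfresh.
  - apply NoDup_app; auto.
    + exact (NoDup_app_remove_l _ _ Hnd).
    + intros y HyQ HyL. apply (Hfresh y HyQ). apply in_or_app; auto.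
  - inversion Hnd as [|? ? Hh Ht]; subst. constructor.
    + rewrite !in_app_iff in *. intros [Hy|[Hy|Hy]]; [tauto | | tauto].
      apply (Hfresh h Hy). simpl; auto.
    + apply IH; auto. intros y Hy Hn. apply (Hfresh y Hy). simpl; auto.
Qed.

Lemma hd_error_app_cons (A l1 l2 : list T) (x : T) :
  hd_error (A ++ x :: l1) = hd_error (A ++ x :: l2).
Proof. destruct A; reflexivity. Qed.

End Lists.

Section FinitePredicates.

Lemma finite_pred_empty {T : Type} (P : T -> Prop) :
  (forall x, ~ P x) -> finite_pred P.
Proof. intro HP. exists []. intros x Hx. exact (HP x Hx). Qed.

Lemma finite_pred_list_union {U T : Type} (N : list U) (P : U -> T -> Prop) :
  (forall u, In u N -> finite_pred (P u)) ->
  finite_pred (fun x => exists u, In u N /\ P u x).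
Proof.
  induction N as [|h t IH]; intro HP.
  - apply finite_pred_empty. intros x [u [[] _]].
  - destruct IH as [l Hl]; [intros u Hu; apply HP; simpl; auto|].
    destruct (HP h (or_introl eq_refl)) as [lh Hlh].
    exists (lh ++ l). intros x [u [[<-|Hu] Pux]]; apply in_or_app; eauto.
Qed.

Lemma finite_pred_members {T : Type} (C : list T -> Prop) :
  finite_pred C -> finite_pred (fun v => exists c, C c /\ In v c).
Proof.
  intros [L HL]. exists (concat L). intros v [c [Cc Hv]].
  apply in_concat. eauto.
Qed.

End FinitePredicates.

Section BlockCycles.
Context {V : Type}.
Variables (S : V -> Prop) (E : V -> V -> Prop).
Hypothesis E_sym : forall x y, E x y -> E y x.
Hypothesis S_connected : connected S E.
Hypothesis S_no_cutvertex : no_cutvertex S E.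
Lemma path_avoiding_vertex (w v b : V) :
  S w -> S v -> S b -> v <> w -> b <> w ->
  exists P, simple_path S E v b P /\ ~ In w P.
Proof.
  intros Sw Sv Sb Hvw Hbw. apply NNPP. intro Hnone.
  apply (S_no_cutvertex w). split; [exact Sw|].
  exists v, b. repeat split; auto; try (apply S_connected; auto).
  intros p Hp. apply NNPP. intro Hwp. apply Hnone. eauto.
Qed.

Variable a : V.
Hypothesis Sa : S a.

(* c lists, starting from a, the vertices of a cycle of (S, E) through a. *)
Definition rooted_cycle (c : list V) : Prop :=
  hd_error c = Some a /\ NoDup c /\ Forall S c /\ chain E (c ++ [a]).

Definition on_rooted_cycle (v : V) : Prop :=
  exists c, rooted_cycle c /\ In v c.

Lemma reroute_ordered (A M B Q : list V) (x y : V) :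
  rooted_cycle (A ++ x :: M ++ y :: B) ->
  NoDup Q -> Forall S Q -> chain E (x :: Q ++ [y]) ->
  (forall z, In z Q -> ~ In z (A ++ x :: M ++ y :: B)) ->
  rooted_cycle (A ++ x :: Q ++ y :: B).
Proof.
  intros [Hhd [Hnd [HS Hch]]] HndQ HSQ HchQ Hfresh.
  assert (Hshape : forall R, A ++ x :: R ++ y :: B = (A ++ [x]) ++ R ++ (y :: B))
    by (intro R; rewrite <- app_assoc; reflexivity).
  repeat split.
  - rewrite <- Hhd. apply hd_error_app_cons.
  - rewrite Hshape in *. exact (NoDup_replace_middle _ M _ _ Hnd HndQ Hfresh).
  - rewrite Forall_forall in *. intros z Hz.
    repeat (rewrite in_app_iff in Hz || simpl in Hz).
    destruct Hz as [Hz|[Hz|[Hz|[Hz|Hz]]]]; auto; apply HS;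
      repeat (rewrite in_app_iff || simpl); tauto.
  - assert (Hsnoc : forall R, (A ++ x :: R ++ y :: B) ++ [a]
                           = A ++ x :: R ++ y :: (B ++ [a]))
      by (intro R; rewrite <- app_assoc; simpl; rewrite <- app_assoc; reflexivity).
    rewrite Hsnoc in *. exact (chain_replace_middle E _ M _ _ _ _ Hch HchQ).
Qed.

Lemma reroute (c Q : list V) (w x : V) :
  rooted_cycle c -> In w c -> In x c -> w <> x ->
  NoDup Q -> Forall S Q -> chain E (w :: Q ++ [x]) ->
  (forall z, In z Q -> ~ In z c) ->
  exists c', rooted_cycle c' /\ incl Q c'.
Proof.
  intros Hc Hw Hx Hwx HndQ HSQ HchQ Hfresh.
  destruct (split_two c w x Hw Hx Hwx) as [A [M [B [-> | ->]]]].
  - exists (A ++ w :: Q ++ x :: B). split.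
    + apply reroute_ordered with M; auto.
    + intros z Hz. apply in_or_app. right. right. apply in_or_app. auto.
  - exists (A ++ x :: rev Q ++ w :: B). split.
    + apply reroute_ordered with M; auto.
      * apply NoDup_rev; auto.
      * apply Forall_rev; auto.
      * apply chain_rev in HchQ; auto. simpl in HchQ.
        rewrite rev_app_distr in HchQ. exact HchQ.
      * intros z Hz. apply Hfresh. apply in_rev; auto.
    + intros z Hz. apply in_or_app. right. right. apply in_or_app.
      left. apply in_rev. rewrite rev_involutive. auto.
Qed.

(* Since a vertex w on a rooted cycle is not a cutvertex, each neighbour v of
   w lies on a rooted cycle as well (or is a itself). *)
Lemma rooted_cycle_extend (w v : V) :
  (w = a \/ on_rooted_cycle w) -> E w v -> S v -> v = a \/ on_rooted_cycle v.
Proof.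
  intros Hw Ewv Sv.
  destruct (classic (v = a)) as [Hva|Hva]; [left; exact Hva|right].
  destruct (classic (w = a)) as [->|Hwa].
  { exists [a; v]. split; [|simpl; auto]. repeat split; simpl; auto.
    constructor; [simpl; intros [H|[]]; auto|]. repeat constructor; auto. }
  destruct Hw as [Hwa'|[c [Hc Hwc]]]; [contradiction|].
  destruct (classic (In v c)) as [Hvc|Hvc]; [exists c; auto|].
  pose proof Hc as [Hhd [_ [HS Hch]]].
  assert (Sw : S w) by (rewrite Forall_forall in HS; auto).
  assert (Hac : In a c) by (destruct c; inversion Hhd; simpl; auto).
  destruct (path_avoiding_vertex w v a) as [P HP]; auto.
  { intros ->. contradiction. }
  destruct HP as [[[PH [PL [PS PC]]] PN] HwP].
  assert (HaP : In a P) by (rewrite <- PL; apply last_in; destruct P; discriminate).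
  destruct (first_occurrence (fun y => In y c) P) as [P1 [x [P2 [-> [Hxc HP1]]]]];
    [eauto|].
  destruct P1 as [|v' Q]; simpl in PH; injection PH as ->; [contradiction|].
  destruct (reroute c (v :: Q) w x) as [c' [Hc' HQ]]; auto.
  - intros ->. apply HwP. apply in_or_app. simpl; auto.
  - exact (NoDup_app_remove_r _ _ PN).
  - rewrite Forall_forall in *. intros y Hy. apply PS. apply in_or_app; auto.
  - split; [exact Ewv|]. exact (proj1 (proj1 (chain_app_iff E _ _ _) PC)).
  - exists c'. split; [exact Hc'|]. apply HQ. simpl; auto.
Qed.

Lemma vertex_on_rooted_cycle (v : V) : S v -> v = a \/ on_rooted_cycle v.
Proof.
  intro Sv. destruct S_connected as [_ Hconn].
  destruct (Hconn v a Sv Sa) as [p [[Hhd [Hlast [HS Hch]]] _]].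
  destruct p as [|v' p]; inversion Hhd; subst v'. clear Hhd.
  revert v Sv Hlast HS Hch.
  induction p as [|w p IH]; intros v Sv Hlast HS Hch; [left; exact Hlast|].
  inversion HS as [|? ? _ HSw]; subst. destruct Hch as [Evw Hch].
  apply rooted_cycle_extend with w; auto.
  apply IH; auto.
  - inversion HSw; auto.
  - rewrite <- Hlast. exact (last_cons_default w w v p).
Qed.

Lemma rooted_cycle_simple_path (adj : V -> V -> Prop)
  (E_sub : forall x y, E x y -> S x /\ S y /\ adj x y)
  (adj_irr : forall x, ~ adj x x) (c : list V) :
  rooted_cycle c ->
  exists u, adj a u /\ S u /\ simple_path (fun _ => True) adj a u c.
Proof.
  intros [Hhd [Hnd [_ Hch]]].
  destruct c as [|a' r]; inversion Hhd; subst a'.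
  destruct r as [|h r].
  { destruct Hch as [Eaa _]. destruct (E_sub _ _ Eaa) as [_ [_ Haa]].
    destruct (adj_irr a Haa). }
  destruct (exists_last (l := h :: r) ltac:(discriminate)) as [l [u Hl]].
  rewrite Hl in *.
  replace ((a :: l ++ [u]) ++ [a]) with ((a :: l) ++ u :: [a]) in Hch
    by (simpl; rewrite <- app_assoc; reflexivity).
  apply chain_app_iff in Hch as [Hch [Eua _]].
  destruct (E_sub _ _ (E_sym _ _ Eua)) as [_ [Su Hau]].
  exists u. repeat split; auto.
  - change (last ((a :: l) ++ [u]) a = u). apply last_last.
  - rewrite Forall_forall; auto.
  - apply chain_mono with E; [|exact Hch]. intros x y Exy. apply (E_sub _ _ Exy).
Qed.

End BlockCycles.

Theorem mainTheorem8 (V : Type) (adj : V -> V -> Prop)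
  (adj_sym : forall x y, adj x y -> adj y x)
  (adj_irr : forall x, ~ adj x x)
  (S : V -> Prop) (E : V -> V -> Prop)
  (HB : is_block adj S E)
  (Hdeg : forall v, S v -> finite_pred (adj v))
  (Hpaths : forall a b, S a -> S b ->
     finite_pred (fun p => simple_path (fun _ => True) adj a b p)) :
  finite_pred S.
Proof.
  destruct HB as [[E_sub E_sym] [Hconn [Hnocut _]]].
  destruct Hconn as [[a Sa] Hpath].
  destruct (Hdeg a Sa) as [N HN].
  (* rooted cycles at a are among the paths from a to the neighbours in N *)
  assert (Hcycles : finite_pred (rooted_cycle S E a)).
  { destruct (finite_pred_list_union N
      (fun u p => S u /\ simple_path (fun _ => True) adj a u p)) as [L HL].
    - intros u _. destruct (classic (S u)) as [Su|nSu].
      + destruct (Hpaths a u Sa Su) as [l Hl]. exists l. intros p [_ Hp]. auto.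
      + apply finite_pred_empty. intros p [Su _]. contradiction.
    - exists L. intros c Hc. apply HL.
      destruct (rooted_cycle_simple_path S E E_sym a adj E_sub adj_irr c Hc)
        as [u [Hau [Su Hp]]].
      eauto. }
  destruct (finite_pred_members _ Hcycles) as [L HL].
  exists (a :: L). intros v Sv.
  destruct (vertex_on_rooted_cycle S E E_sym (conj (ex_intro _ a Sa) Hpath)
              Hnocut a Sa v Sv) as [->|Hv]; simpl; auto.
Qed.
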